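(* For every instance of MCND that has a feasible solution and every partial aggregation $\mathcal{B}$ (see context), the optimal values of the LP relaxations of the PA, PAi and PAe formulations built on $\mathcal{B}$ are each lower bounds on the optimal value of MCND.
   Context: An instance of MCND consists of a directed graph $G=(\mathcal{N},\mathcal{A})$, a finite set $\mathcal{K}$ of commodities, each $k\in\mathcal{K}$ having an origin $o^k\in\mathcal{N}$, a destination $s^k\in\mathcal{N}$ and a demand $d^k\ge 0$, and for each arc $(i,j)\in\mathcal{A}$ a capacity $u_{ij}$, a per-unit flow cost $c_{ij}$ and a fixed cost $f_{ij}$, all nonnegative. Let $o_i^k=1$ if $i=o^k$ and $0$ otherwise, $s_i^k=1$ if $i=s^k$ and $0$ otherwise, $\mathcal{N}_i^+=\{j:(i,j)\in\mathcal{A}\}$, $\mathcal{N}_i^-=\{j:(j,i)\in\mathcal{A}\}$. MCND: minimize $\sum_{k}\sum_{(i,j)}c_{ij}x_{ij}^k+\sum_{(i,j)}f_{ij}y_{ij}$ over $x_{ij}^k\ge0$, $y_{ij}\in\{0,1\}$, subject to $\sum_{j\in\mathcal{N}_i^+}x_{ij}^k-\sum_{j\in\mathcal{N}_i^-}x_{ji}^k=(o_i^k-s_i^k)d^k$ for all $k,i$; $\sum_k x_{ij}^k\le u_{ij}y_{ij}$ for all $(i,j)$; $x_{ij}^k\le d^k y_{ij}$ for all $k,(i,j)$. Dispersion: a nonempty set $\mathcal{K}_b\subseteq\mathcal{K}$ of commodities sharing a common origin, together with, for every arc $(i,j)\in\mathcal{A}$, a partition of $\mathcal{K}_b$ into $\mathcal{K}_b^{ij}$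 (aggregated on $(i,j)$) and $\mathcal{D}_b^{ij}$ (disaggregated on $(i,j)$); either part may be empty. Let $\mathcal{G}_b^{ij}$ be the family consisting of the set $\mathcal{K}_b^{ij}$ (if nonempty) together with the singletons $\{k\}$, $k\in\mathcal{D}_b^{ij}$. A partial aggregation is a set $\mathcal{B}$ of dispersions such that every $k\in\mathcal{K}$ lies in $\mathcal{K}_b$ for exactly one $b\in\mathcal{B}$. LP relaxation of PA (for $\mathcal{B}$): variables $x_{ij}^D\ge0$ for $(i,j)\in\mathcal{A}$, $b\in\mathcal{B}$, $D\in\mathcal{G}_b^{ij}$ (since the $\mathcal{K}_b$ are disjoint, $D$ determines $b$), and $0\le y_{ij}\le1$; minimize $\sum_{(i,j)}c_{ij}\sum_{b}\sum_{D\in\mathcal{G}_b^{ij}}x_{ij}^D+\sum_{(i,j)}f_{ij}y_{ij}$ subject to: for all $b\in\mathcal{B}$, $i\in\mathcal{N}$: $\sum_{j\in\mathcal{N}_i^+}\sum_{D\in\mathcal{G}_b^{ij}}x_{ij}^D-\sum_{j\in\mathcal{N}_i^-}\sum_{D\in\mathcal{G}_b^{ji}}x_{ji}^D=\sum_{k\in\mathcal{K}_b}(o_i^k-s_i^k)d^k$; for all $(i,j)$: $\sum_b\sum_{D\in\mathcal{G}_b^{ij}}x_{ij}^D\le u_{ij}y_{ij}$; for all $(i,j),b,D\in\mathcal{G}_b^{ij}$: $x_{ij}^D\le(\sum_{k\in D}d^k)y_{ij}$. LP relaxation of PAi: the PA LP plus, for all $b\in\mathcal{B}$, $k\in\mathcal{K}_b$,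 $i\in\mathcal{N}$: $\sum_{j\in\mathcal{N}_i^+}\sum_{D\in\mathcal{G}_b^{ij}:k\in D}x_{ij}^D-\sum_{j\in\mathcal{N}_i^-}\sum_{D\in\mathcal{G}_b^{ji}:D=\{k\}}x_{ji}^D\ge(o_i^k-s_i^k)d^k$ and $\sum_{j\in\mathcal{N}_i^+}\sum_{D\in\mathcal{G}_b^{ij}:D=\{k\}}x_{ij}^D-\sum_{j\in\mathcal{N}_i^-}\sum_{D\in\mathcal{G}_b^{ji}:k\in D}x_{ji}^D\le(o_i^k-s_i^k)d^k$. LP relaxation of PAe: the PA LP plus the following. For $b\in\mathcal{B}$, $i\in\mathcal{N}$ let $\mathcal{L}_b^i=\{k\in\mathcal{K}_b:k\in\mathcal{D}_b^{ji}\text{ for some }j\in\mathcal{N}_i^-\text{ or }k\in\mathcal{D}_b^{ij}\text{ for some }j\in\mathcal{N}_i^+\}$; $\mathcal{M}_b^i=\{\{k\}:k\in\mathcal{L}_b^i\}\cup\{\mathcal{K}_b\setminus\mathcal{L}_b^i\}$ (the last set only if nonempty); $\check{\mathcal{T}}_b^i$ = the set of distinct nonempty sets among $\{\mathcal{K}_b^{ji}:j\in\mathcal{N}_i^-\}$; $\hat{\mathcal{T}}_b^i$ = the set of distinct nonempty sets among $\{\mathcal{K}_b^{ij}:j\in\mathcal{N}_i^+\}$. For every $(b,i)$ with $\mathcal{L}_b^i\neq\emptyset$ add variables $z_{CD}^{ib}\ge0$ for $C\in\check{\mathcal{T}}_b^i$, $D\in\mathcal{M}_b^i$ with $C\cap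 D\ne\emptyset$, and $z_{DC}^{ib}\ge0$ for $D\in\mathcal{M}_b^i$, $C\in\hat{\mathcal{T}}_b^i$ with $C\cap D\neq\emptyset$ (zero cost), and constraints: for each $D\in\mathcal{M}_b^i$: $\sum_{j\in\mathcal{N}_i^+:\,D=\{k\},k\in\mathcal{D}_b^{ij}}x_{ij}^{D}-\sum_{j\in\mathcal{N}_i^-:\,D=\{k\},k\in\mathcal{D}_b^{ji}}x_{ji}^{D}+\sum_{C\in\hat{\mathcal{T}}_b^i:C\cap D\neq\emptyset}z_{DC}^{ib}-\sum_{C\in\check{\mathcal{T}}_b^i:C\cap D\ne\emptyset}z_{CD}^{ib}=\sum_{k\in D}(o_i^k-s_i^k)d^k$; for each $C\in\check{\mathcal{T}}_b^i$: $\sum_{D\in\mathcal{M}_b^i:C\cap D\ne\emptyset}z_{CD}^{ib}-\sum_{j\in\mathcal{N}_i^-:\mathcal{K}_b^{ji}=C}x_{ji}^C=0$; for each $C\in\hat{\mathcal{T}}_b^i$: $\sum_{j\in\mathcal{N}_i^+:\mathcal{K}_b^{ij}=C}x_{ij}^C-\sum_{D\in\mathcal{M}_b^i:C\cap D\neq\emptyset}z_{DC}^{ib}=0$. The objective is that of PA. *)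

From HB Require Import structures.
From mathcomp Require Import reals.
From mathcomp Require Import all_boot all_order all_algebra.
Set Implicit Arguments. Unset Strict Implicit. Unset Printing Implicit Defensive.
Import Order.TTheory GRing.Theory Num.Theory.
Local Open Scope ring_scope.

(* An MCND instance: nodes N, arcs A (arc a goes from src a to dst a),
   commodities K (origin orig k, destination dest k, demand d k),
   capacity u, unit cost c, fixed cost f on arcs.
   A partial aggregation: dispersions indexed by the finite type B,
   KB b = K_b, agg b a = K_b^{a} (aggregated part on arc a),
   dis b a = D_b^{a} = K_b \ K_b^{a}. *)

Section MCND.
Variables (R : realType) (N A K : finType).
Variables (src dst : A -> N) (orig dest : K -> N) (d : K -> R) (u c f : A -> R).

Definition rhs (k : K) (i : N) : R := ((orig k == i)%:R - (dest k == i)%:R) * d k.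

Definition mcnd_feasible (x : K -> A -> R) (y : A -> bool) : Prop :=
  (forall k a, 0 <= x k a) /\
  (forall k i, \sum_(a | src a == i) x k a - \sum_(a | dst a == i) x k a = rhs k i) /\
  (forall a, \sum_k x k a <= u a * (y a)%:R) /\
  (forall k a, x k a <= d k * (y a)%:R).

Definition mcnd_obj (x : K -> A -> R) (y : A -> bool) : R :=
  \sum_k \sum_a c a * x k a + \sum_a f a * (y a)%:R.

Definition mcnd_value : R :=
  inf (fun v : R => exists x y, mcnd_feasible x y /\ v = mcnd_obj x y).

Variables (B : finType) (KB : B -> {set K}) (agg : B -> A -> {set K}).

Definition dis (b : B) (a : A) : {set K} := KB b :\: agg b a.

Definition is_partial_aggregation : Prop :=
  (forall b, KB b != set0) /\
  (forall b k k', k \in KB b -> k' \in KB b -> orig k = orig k') /\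
  (forall b a, agg b a \subset KB b) /\
  (forall k, exists! b, k \in KB b).

Definition Gb (b : B) (a : A) : {set {set K}} :=
  [set D | (D == agg b a) && (D != set0)] :|: [set [set k] | k in dis b a].

(* variables: x a D (= x_{ij}^D for a = (i,j), D in G_b^{ij}), y a in [0,1] *)
Definition pa_feasible (x : A -> {set K} -> R) (y : A -> R) : Prop :=
  (forall b a D, D \in Gb b a -> 0 <= x a D) /\
  (forall a, 0 <= y a <= 1) /\
  (forall b i, \sum_(a | src a == i) \sum_(D in Gb b a) x a D
             - \sum_(a | dst a == i) \sum_(D in Gb b a) x a D
             = \sum_(k in KB b) rhs k i) /\
  (forall a, \sum_b \sum_(D in Gb b a) x a D <= u a * y a) /\
  (forall b a D, D \in Gb b a -> x a D <= (\sum_(k in D) d k) * y a).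

Definition pa_obj (x : A -> {set K} -> R) (y : A -> R) : R :=
  \sum_a c a * (\sum_b \sum_(D in Gb b a) x a D) + \sum_a f a * y a.

Definition pa_value : R :=
  inf (fun v : R => exists x y, pa_feasible x y /\ v = pa_obj x y).

Definition pai_extra (x : A -> {set K} -> R) : Prop :=
  forall b k i, k \in KB b ->
    rhs k i <= \sum_(a | src a == i) \sum_(D in Gb b a | k \in D) x a D
               - \sum_(a | dst a == i) \sum_(D in Gb b a | D == [set k]) x a D /\
    \sum_(a | src a == i) \sum_(D in Gb b a | D == [set k]) x a D
      - \sum_(a | dst a == i) \sum_(D in Gb b a | k \in D) x a D <= rhs k i.

Definition pai_value : R :=
  inf (fun v : R => exists x y, pa_feasible x y /\ pai_extra x /\ v = pa_obj x y).

Definition Lset (b : B) (i : N) : {set K} :=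
  [set k in KB b | [exists a, ((dst a == i) || (src a == i)) && (k \in dis b a)]].

Definition Mset (b : B) (i : N) : {set {set K}} :=
  [set [set k] | k in Lset b i]
  :|: [set D | (D == KB b :\: Lset b i) && (D != set0)].

Definition Tin (b : B) (i : N) : {set {set K}} :=
  [set C | [exists a, (dst a == i) && (C == agg b a)] && (C != set0)].
Definition Tout (b : B) (i : N) : {set {set K}} :=
  [set C | [exists a, (src a == i) && (C == agg b a)] && (C != set0)].

Definition single_dis (b : B) (a : A) (D : {set K}) : bool :=
  [exists k, (D == [set k]) && (k \in dis b a)].

(* zin b i C D = z_{CD}^{ib} (C in \check T, D in M);
   zout b i D C = z_{DC}^{ib} (D in M, C in \hat T). *)
Definition pae_extra (x : A -> {set K} -> R)
    (zin zout : B -> N -> {set K} -> {set K} -> R) : Prop :=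
  forall b i, Lset b i != set0 ->
  (forall C D, C \in Tin b i -> D \in Mset b i -> C :&: D != set0 ->
       0 <= zin b i C D) /\
  (forall D C, D \in Mset b i -> C \in Tout b i -> C :&: D != set0 ->
       0 <= zout b i D C) /\
  (forall D, D \in Mset b i ->
       \sum_(a | (src a == i) && single_dis b a D) x a D
     - \sum_(a | (dst a == i) && single_dis b a D) x a D
     + \sum_(C in Tout b i | C :&: D != set0) zout b i D C
     - \sum_(C in Tin b i | C :&: D != set0) zin b i C D
     = \sum_(k in D) rhs k i) /\
  (forall C, C \in Tin b i ->
       \sum_(D in Mset b i | C :&: D != set0) zin b i C D
     - \sum_(a | (dst a == i) && (agg b a == C)) x a C = 0) /\
  (forall C, C \in Tout b i ->
       \sum_(a | (src a == i) && (agg b a == C)) x a C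
     - \sum_(D in Mset b i | C :&: D != set0) zout b i D C = 0).

Definition pae_value : R :=
  inf (fun v : R => exists x y zin zout,
         pa_feasible x y /\ pae_extra x zin zout /\ v = pa_obj x y).

End MCND.

From HB Require Import structures.
From mathcomp Require Import reals.
From mathcomp Require Import all_boot all_order all_algebra.
Set Implicit Arguments. Unset Strict Implicit. Unset Printing Implicit Defensive.
Import Order.TTheory GRing.Theory Num.Theory.
Local Open Scope ring_scope.

(* An integer solution (x, y) of MCND yields a solution of each relaxation with
   the same cost: put x^D := sum_(k in D) x^k on every arc and keep y.  The
   sets in G_b^{ij}, and those in M_b^i, split K_b into disjoint blocks, so the
   aggregated flows inherit flow conservation and the capacity and linking
   constraints; the PAi inequalities hold because the block of k carries at
   least x^k and the singleton {k} exactly x^k.  For PAe, z_{CD} (resp. z_{DC})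
   is the flow of the commodities of C :&: D on the arcs entering (resp.
   leaving) i on which exactly C is aggregated; the balance of a block D of
   M_b^i is then the sum of the conservation equations of its commodities.
   As the relaxed objectives are nonnegative, the set of relaxed values is
   bounded below and contains every MCND value, so its infimum is at most the
   MCND infimum. *)

Lemma le_inf_subset (R : realType) (E M : classical_sets.set R) :
  classical_sets.has_lbound E -> (exists v, M v) -> (forall v, M v -> E v) ->
  inf E <= inf M.
Proof.
move=> lbE [v Mv] ME; apply: lb_le_inf; first by exists v.
by move=> w /ME; exact: ge_inf.
Qed.

Definition disjoint_cover (T I : finType) (P : pred I) (F : I -> {set T})
    (S : {set T}) : Prop :=
  (forall i, P i -> F i \subset S) /\
  (forall t, t \in S -> exists! i, P i && (t \in F i)).

Section DisjointCover.
Variables (T I : finType) (P : pred I).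

Lemma big_disjoint_cover (V : nmodType) (F : I -> {set T}) S (g : T -> V) :
  disjoint_cover P F S -> \sum_(i | P i) \sum_(t in F i) g t = \sum_(t in S) g t.
Proof.
move=> [subS uniqF]; under eq_bigr do rewrite big_mkcond.
rewrite exchange_big [RHS]big_mkcond /=; apply: eq_bigr => t _.
case: ifP => tS.
- have [i0 [/andP[Pi0 ti0] eq_i0]] := uniqF t tS.
  rewrite (bigD1 i0) //= ti0 big1 ?addr0 // => i /andP[Pi ne_i].
  case: ifP => // tFi; have /eq_i0 eq_i : P i && (t \in F i) by rewrite Pi tFi.
  by rewrite eq_i eqxx in ne_i.
- rewrite big1 // => i Pi; case: ifP => // tFi.
  by rewrite (subsetP (subS i Pi) t tFi) in tS.
Qed.

Lemma disjoint_coverI (F : I -> {set T}) S (C : {set T}) :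
  disjoint_cover P F S -> disjoint_cover P (fun i => C :&: F i) (C :&: S).
Proof.
move=> [subS uniqF]; split=> [i Pi | t]; first exact/setIS/subS.
rewrite inE => /andP[tC /uniqF[i0 [Fi0 eq_i0]]]; exists i0.
split=> [|i]; first by rewrite inE tC.
by rewrite inE tC; exact: eq_i0.
Qed.

End DisjointCover.

Lemma ler_sum_term (R : numDomainType) (I : finType) (P : pred I) (F : I -> R) i :
  (forall j, P j -> 0 <= F j) -> P i -> F i <= \sum_(j | P j) F j.
Proof.
move=> F_ge0 Pi; rewrite (bigD1 i) //= lerDl sumr_ge0 // => j /andP[Pj _].
exact: F_ge0.
Qed.

Lemma sum_drop_cond (V : nmodType) (I : finType) (P Q : pred I) (F : I -> V) :
  (forall i, P i -> ~~ Q i -> F i = 0) ->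
  \sum_(i | P i && Q i) F i = \sum_(i | P i) F i.
Proof.
move=> F0; rewrite big_mkcondr; apply: eq_bigr => i Pi.
by case: ifP => // /negbT /(F0 i Pi) ->.
Qed.

Section Aggregation.
Variables (R : realType) (N A K B : finType).
Variables (src dst : A -> N) (orig dest : K -> N) (d : K -> R) (u c f : A -> R).
Variables (KB : B -> {set K}) (agg : B -> A -> {set K}).
Hypothesis agg_sub : forall b a, agg b a \subset KB b.
Hypothesis KB_uniq : forall k, exists! b, k \in KB b.

Local Notation Gb := (Gb KB agg).
Local Notation dis := (dis KB agg).
Local Notation Lset := (Lset src dst KB agg).
Local Notation Mset := (Mset src dst KB agg).
Local Notation single_dis := (single_dis KB agg).
Local Notation rhs := (rhs orig dest d).

Lemma disjoint_cover_KB : disjoint_cover predT KB setT.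
Proof.
split=> [b _ | k _]; first exact: subsetT.
by have [b [kb eq_b]] := KB_uniq k; exists b; split=> // b'; exact: eq_b.
Qed.

Lemma disjoint_cover_Gb b a : disjoint_cover [in Gb b a] id (KB b).
Proof.
split=> [D | k kb].
  rewrite !inE => /orP[/andP[/eqP -> _] | /imsetP[k kd ->]]; first exact: agg_sub.
  by rewrite sub1set; case/setDP: kd.
have [ka | ka] := boolP (k \in agg b a).
- exists (agg b a); split.
    by rewrite !inE eqxx ka andbT; apply/orP; left; apply/set0Pn; exists k.
  move=> D; rewrite !inE => /andP[/orP[/andP[/eqP -> //] | /imsetP[k' k'd ->]]].
  by rewrite inE => /eqP k'k; move: k'd; rewrite -k'k inE ka.
- have kd : k \in dis b a by rewrite inE ka.
  exists [set k]; split.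
    by rewrite !inE eqxx andbT; apply/orP; right; apply/imsetP; exists k.
  move=> D; rewrite !inE => /andP[/orP[/andP[/eqP -> _] | /imsetP[k' _ ->]]].
    by move=> kag; rewrite kag in ka.
  by rewrite inE => /eqP ->.
Qed.

Lemma disjoint_cover_Mset b i : disjoint_cover [in Mset b i] id (KB b).
Proof.
split=> [D | k kb].
  rewrite !inE => /orP[/imsetP[k kL ->] | /andP[/eqP -> _]]; last exact: subsetDl.
  by rewrite sub1set; move: kL; rewrite inE => /andP[].
have [kL | kL] := boolP (k \in Lset b i).
- exists [set k]; split.
    by rewrite !inE eqxx andbT; apply/orP; left; apply/imsetP; exists k.
  move=> D; rewrite !inE => /andP[/orP[/imsetP[k' _ ->] | /andP[/eqP -> _]]].
    by rewrite inE => /eqP ->.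
  by rewrite inE kL.
- exists (KB b :\: Lset b i); split.
    have kD : k \in KB b :\: Lset b i by rewrite in_setD kL.
    by rewrite kD andbT !inE eqxx; apply/orP; right; apply/set0Pn; exists k.
  move=> D; rewrite !inE => /andP[/orP[/imsetP[k' k'L ->] | /andP[/eqP -> _]] //].
  by rewrite inE => /eqP k'k; rewrite k'k k'L in kL.
Qed.

Lemma pa_obj_ge0 x y : (forall a, 0 <= c a) -> (forall a, 0 <= f a) ->
  pa_feasible src dst orig dest d u KB agg x y -> 0 <= pa_obj c f KB agg x y.
Proof.
move=> c_ge0 f_ge0 [x_ge0 [y01 _]].
apply: addr_ge0; apply: sumr_ge0 => a _; apply: mulr_ge0 => //.
- by apply: sumr_ge0 => b _; apply: sumr_ge0 => D; exact: x_ge0.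
- by case/andP: (y01 a).
Qed.

Lemma sum_KB (V : nmodType) (g : K -> V) : \sum_b \sum_(k in KB b) g k = \sum_k g k.
Proof.
rewrite (big_disjoint_cover _ disjoint_cover_KB).
by apply: eq_bigl => k; exact: in_setT.
Qed.

Variables (x : K -> A -> R) (y : A -> bool).
Hypothesis x_feasible : mcnd_feasible src dst orig dest d u x y.

Definition block_flow (a : A) (D : {set K}) : R := \sum_(k in D) x k a.
Definition design (a : A) : R := (y a)%:R.

Lemma flow_ge0 k a : 0 <= x k a.
Proof. by case: x_feasible. Qed.

Lemma flow_conservation k i :
  \sum_(a | src a == i) x k a - \sum_(a | dst a == i) x k a = rhs k i.
Proof. by case: x_feasible => _ []. Qed.

Lemma block_flow_ge0 a D : 0 <= block_flow a D.
Proof. by apply: sumr_ge0 => k _; exact: flow_ge0. Qed.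

Lemma sum_Gb_block_flow b a :
  \sum_(D in Gb b a) block_flow a D = \sum_(k in KB b) x k a.
Proof. exact: (big_disjoint_cover _ (disjoint_cover_Gb b a)). Qed.

Lemma pa_feasible_block_flow :
  pa_feasible src dst orig dest d u KB agg block_flow design.
Proof.
have [_ [_ [cap link]]] := x_feasible.
split; [|split; [|split; [|split]]].
- by move=> *; exact: block_flow_ge0.
- by move=> a; rewrite /design; case: (y a); rewrite ?lexx ?ler01.
- move=> b i; under eq_bigr do rewrite sum_Gb_block_flow.
  under [X in _ - X]eq_bigr do rewrite sum_Gb_block_flow.
  rewrite exchange_big [X in _ - X]exchange_big -sumrB.
  by apply: eq_bigr => k _; exact: flow_conservation.
- move=> a; under eq_bigr do rewrite sum_Gb_block_flow.
  by rewrite sum_KB; exact: cap.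
- move=> b a D _; rewrite /block_flow /design mulr_suml.
  by apply: ler_sum => k _; exact: link.
Qed.

Lemma pa_obj_block_flow : pa_obj c f KB agg block_flow design = mcnd_obj c f x y.
Proof.
rewrite /pa_obj /mcnd_obj; congr (_ + _).
under eq_bigr do rewrite (eq_bigr _ (fun b _ => sum_Gb_block_flow b _)) sum_KB mulr_sumr.
by rewrite exchange_big.
Qed.

Lemma flow_le_sum_blocks b a k : k \in KB b ->
  x k a <= \sum_(D in Gb b a | k \in D) block_flow a D.
Proof.
move=> kb; have [_ /(_ k kb)[D0 [/andP[D0G kD0] _]]] := disjoint_cover_Gb b a.
apply: (@le_trans _ _ (block_flow a D0)).
  by apply: ler_sum_term kD0 => k' _; exact: flow_ge0.
by apply: ler_sum_term => [D _|]; [exact: block_flow_ge0 | rewrite D0G kD0].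
Qed.

Lemma sum_singleton_blocks_le b a k :
  \sum_(D in Gb b a | D == [set k]) block_flow a D <= x k a.
Proof.
have [kG | kNG] := boolP ([set k] \in Gb b a).
- rewrite (big_pred1 [set k]) => [|D]; first by rewrite /block_flow big_set1.
  by rewrite /= andbC; case: eqP => // ->; rewrite kG.
- rewrite big_pred0 ?flow_ge0 // => D.
  by case: eqP => [->|]; rewrite ?andbF ?andbT ?(negbTE kNG).
Qed.

Lemma pai_extra_block_flow : pai_extra src dst orig dest d KB agg block_flow.
Proof.
move=> b k i kb; rewrite -flow_conservation.
by split; apply: lerB; apply: ler_sum => a _;
  first [exact: flow_le_sum_blocks | exact: sum_singleton_blocks_le].
Qed.

Definition Tset (p : pred A) b : {set {set K}} :=
  [set C | [exists a, p a && (C == agg b a)] && (C != set0)].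

Definition split_flow (p : pred A) b (C D : {set K}) : R :=
  \sum_(a | p a && (agg b a == C)) \sum_(k in C :&: D) x k a.

Definition z_in b i (C D : {set K}) : R := split_flow (fun a => dst a == i) b C D.
Definition z_out b i (D C : {set K}) : R := split_flow (fun a => src a == i) b C D.

Lemma split_flow_ge0 p b C D : 0 <= split_flow p b C D.
Proof. by do 2!(apply: sumr_ge0 => ? _); exact: flow_ge0. Qed.

Lemma split_flow_disjoint p b C D : C :&: D = set0 -> split_flow p b C D = 0.
Proof. by move=> CD0; apply: big1 => a _; rewrite CD0 big_set0. Qed.

Lemma Tset_sub p b C : C \in Tset p b -> C \subset KB b.
Proof. by rewrite inE => /andP[/existsP[a /andP[_ /eqP ->]] _]; exact: agg_sub. Qed.

Lemma sum_Mset_split_flow p b i (C : {set K}) : C \subset KB b ->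
  \sum_(D in Mset b i) split_flow p b C D
  = \sum_(a | p a && (agg b a == C)) block_flow a C.
Proof.
move=> CKB; rewrite /split_flow exchange_big; apply: eq_bigr => a _.
rewrite (big_disjoint_cover _ (disjoint_coverI C (disjoint_cover_Mset b i))).
by rewrite (setIidPl CKB).
Qed.

Lemma dis_Lset b a i k :
  (dst a == i) || (src a == i) -> k \in dis b a -> k \in Lset b i.
Proof.
move=> ai kd; rewrite inE; apply/andP; split; first by case/setDP: kd.
by apply/existsP; exists a; rewrite ai kd.
Qed.

Lemma Mset_block_Lset b i D k :
  D \in Mset b i -> k \in D -> k \in Lset b i -> D = [set k].
Proof.
move=> DM kD kL; have kb : k \in KB b by move: kL; rewrite inE => /andP[].
have [_ /(_ k kb)[D0 [_ eq_D0]]] := disjoint_cover_Mset b i.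
have kM : [set k] \in Mset b i by rewrite inE; apply/orP; left; apply/imsetP; exists k.
by rewrite -(eq_D0 D) ?DM ?kD // (eq_D0 [set k]) ?kM ?set11.
Qed.

Section NodeBalance.
Variables (p : pred A) (b : B) (i : N) (D : {set K}).
Hypothesis p_incident : forall a, p a -> (dst a == i) || (src a == i).
Hypothesis DM : D \in Mset b i.

Lemma sum_single_dis_block_flow :
  \sum_(a | p a && single_dis b a D) block_flow a D
  = \sum_(a | p a) \sum_(k in D | k \in dis b a) x k a.
Proof.
rewrite [RHS](bigID (fun a => single_dis b a D)) /= [X in _ = _ + X]big1 ?addr0.
- apply: eq_bigr => a /andP[_ /existsP[k0 /andP[/eqP -> k0d]]].
  rewrite /block_flow big_set1 (big_pred1 k0) // => k /=.
  by rewrite in_set1; case: eqP => // ->.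
- move=> a /andP[pa /existsP nsd]; apply: big1 => k /andP[kD kd].
  case: nsd; exists k; rewrite kd andbT.
  by rewrite (Mset_block_Lset DM kD) ?eqxx //; exact: dis_Lset (p_incident pa) kd.
Qed.

Lemma sum_Tset_split_flow :
  \sum_(C in Tset p b | C :&: D != set0) split_flow p b C D
  = \sum_(a | p a) \sum_(k in D | k \in agg b a) x k a.
Proof.
rewrite sum_drop_cond => [|C _]; last by move/negbNE/eqP/split_flow_disjoint.
rewrite [RHS](bigID (fun a => agg b a != set0)) /= [X in _ = _ + X]big1 ?addr0; last first.
  by move=> a /andP[_ /negbNE /eqP ->]; apply: big_pred0 => k; rewrite in_set0 andbF.
rewrite (partition_big (agg b) [in Tset p b]) => [|a /andP[pa ne]]; last first.
  by rewrite inE ne andbT; apply/existsP; exists a; rewrite pa eqxx.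
apply: eq_bigr => C; rewrite inE => /andP[_ Cne]; apply: eq_big => [a|a].
- by case: eqP => [->|]; rewrite ?Cne ?andbF ?andbT.
- by move=> /andP[_ /eqP <-]; apply: eq_bigl => k; rewrite inE andbC.
Qed.

Lemma block_balance :
  \sum_(a | p a && single_dis b a D) block_flow a D
  + \sum_(C in Tset p b | C :&: D != set0) split_flow p b C D
  = \sum_(k in D) \sum_(a | p a) x k a.
Proof.
rewrite sum_single_dis_block_flow sum_Tset_split_flow -big_split [RHS]exchange_big /=.
apply: eq_bigr => a _; rewrite [RHS](bigID [in agg b a]) addrC /=; congr (_ + _).
apply: eq_bigl => k; rewrite in_setD andbC; case kD: (k \in D); rewrite ?andbF //=.
have [subKB _] := disjoint_cover_Mset b i.
by rewrite (subsetP (subKB D DM) k kD) !andbT.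
Qed.

End NodeBalance.

Lemma pae_extra_block_flow :
  pae_extra src dst orig dest d KB agg block_flow z_in z_out.
Proof.
move=> b i _; split; [|split; [|split; [|split]]].
- by move=> *; exact: split_flow_ge0.
- by move=> *; exact: split_flow_ge0.
- move=> D DM.
  have out_incident a : src a == i -> (dst a == i) || (src a == i) by move->; rewrite orbT.
  have in_incident a : dst a == i -> (dst a == i) || (src a == i) by move->.
  rewrite -(eq_bigr _ (fun k _ => flow_conservation k i)) sumrB.
  rewrite -(block_balance out_incident DM) -(block_balance in_incident DM).
  by rewrite opprD !addrA (addrAC _ (- _)).
- move=> C CT; rewrite /z_in sum_drop_cond => [|D _]; last by move/negbNE/eqP/split_flow_disjoint.
  by rewrite sum_Mset_split_flow ?subrr //; exact: Tset_sub CT.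
- move=> C CT; rewrite /z_out [X in _ - X]sum_drop_cond => [|D _]; last by move/negbNE/eqP/split_flow_disjoint.
  by rewrite sum_Mset_split_flow ?subrr //; exact: Tset_sub CT.
Qed.

End Aggregation.

Theorem corollary1 (R : realType) (N A K B : finType)
    (src dst : A -> N) (orig dest : K -> N) (d : K -> R) (u c f : A -> R)
    (KB : B -> {set K}) (agg : B -> A -> {set K}) :
  injective (fun a => (src a, dst a)) ->
  (forall k, 0 <= d k) -> (forall a, 0 <= u a) ->
  (forall a, 0 <= c a) -> (forall a, 0 <= f a) ->
  is_partial_aggregation orig KB agg ->
  (exists x y, mcnd_feasible src dst orig dest d u x y) ->
  pa_value src dst orig dest d u c f KB agg
    <= mcnd_value src dst orig dest d u c f /\
  pai_value src dst orig dest d u c f KB agg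
    <= mcnd_value src dst orig dest d u c f /\
  pae_value src dst orig dest d u c f KB agg
    <= mcnd_value src dst orig dest d u c f.
Proof.
move=> _ _ _ c_ge0 f_ge0 [_ [_ [agg_sub KB_uniq]]] [x0 [y0 feas0]].
have mcnd_nonempty : exists v, exists x y,
    mcnd_feasible src dst orig dest d u x y /\ v = mcnd_obj c f x y.
  by exists (mcnd_obj c f x0 y0), x0, y0.
split; [|split]; apply: le_inf_subset => //.
- by exists 0 => _ [x [y [feas ->]]]; exact: pa_obj_ge0 c_ge0 f_ge0 feas.
- move=> _ [x [y [feas ->]]]; exists (block_flow x), (design R y).
  rewrite pa_obj_block_flow //; split=> //.
  exact: (pa_feasible_block_flow agg_sub KB_uniq feas).
- by exists 0 => _ [x [y [feas [_ ->]]]]; exact: pa_obj_ge0 c_ge0 f_ge0 feas.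
- move=> _ [x [y [feas ->]]]; exists (block_flow x), (design R y).
  rewrite pa_obj_block_flow //; split; last split=> //.
    exact: (pa_feasible_block_flow agg_sub KB_uniq feas).
  exact: (pai_extra_block_flow agg_sub feas).
- by exists 0 => _ [x [y [zi [zo [feas [_ ->]]]]]]; exact: pa_obj_ge0 c_ge0 f_ge0 feas.
- move=> _ [x [y [feas ->]]]; exists (block_flow x), (design R y).
  exists (z_in dst agg x), (z_out src agg x).
  rewrite pa_obj_block_flow //; split; last split=> //.
    exact: (pa_feasible_block_flow agg_sub KB_uniq feas).
  exact: (pae_extra_block_flow agg_sub feas).
Qed.
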